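(* Let $m$ be a positive integer and $h$ a positive integer, and assume that the ternary (base-3) expansion of $4^m$ contains no block of $h$ consecutive digits all equal to $0$, and no block of $h$ consecutive digits all equal to $2$. Then the inequality $$\biggl\|\biggl(\frac43\biggr)^k\biggr\| \ge \biggl(\frac49\biggr)^k$$ holds for all integers $k$ satisfying $$m\,\frac{\log 4}{\log 9} + \frac h2 \le k \le m,$$ where $\|x\|$ denotes the distance from the real number $x$ to the nearest integer.
   Context: $\|x\| = \min_{n\in\mathbb Z}|x-n|$ for real $x$. The ternary expansion is the standard base-3 representation of the positive integer $4^m$ (with digits in $\{0,1,2\}$, no leading zeros beyond the representation). *)

From Stdlib Require Import Reals Lra Lia List Arith.
Open Scope R_scope.

Definition dist_int (x : R) : R :=
  Rmin (x - IZR (Int_part x)) (IZR (Int_part x) + 1 - x).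

(* Little-endian base-3 digits of n (empty for n = 0); fuel = n suffices. *)
Fixpoint tern_aux (fuel n : nat) : list nat :=
  match fuel with
  | O => nil
  | S f => match n with
           | O => nil
           | _ => (n mod 3)%nat :: tern_aux f (n / 3)%nat
           end
  end.

Definition ternary_digits (n : nat) : list nat := tern_aux n n.

Definition has_block (ds : list nat) (h d : nat) : Prop :=
  exists i : nat, (i + h <= length ds)%nat /\
    forall j : nat, (j < h)%nat -> nth (i + j) ds 0%nat = d.

(* If (4/3)^k is within (4/9)^k of an integer M, then 4^k = M 3^k + E with
   |E| 3^k < 4^k.  Multiplying by 4^(m-k) gives 4^m = 3^k q + D with
   |D| 3^k < 4^m <= 9^k / 3^h (the lower bound on k), i.e. |D| < 3^(k-h).
   So 4^m mod 3^k is either below 3^(k-h) or within 3^(k-h) of 3^k: the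
   ternary digits of 4^m in positions k-h, ..., k-1 are then all 0 or all 2. *)

From Stdlib Require Import Reals Lra Lia Arith ZArith List.
Open Scope R_scope.

Definition digit3 (n i : nat) : nat := ((n / 3 ^ i) mod 3)%nat.

Lemma pow3_pos (n : nat) : (1 <= 3 ^ n)%nat.
Proof. pose proof (Nat.pow_nonzero 3 n). lia. Qed.

Lemma pow_split (b k m : nat) : (k <= m)%nat -> (b ^ m = b ^ k * b ^ (m - k))%nat.
Proof. intro Hkm. rewrite <- Nat.pow_add_r. f_equal. lia. Qed.

Lemma nth_tern_aux (f n j : nat) : (n <= f)%nat ->
  nth j (tern_aux f n) 0%nat = digit3 n j.
Proof.
  unfold digit3; revert n j; induction f as [|f IH]; intros n j Hn.
  - replace n with 0%nat by lia. rewrite Nat.Div0.div_0_l. now destruct j.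
  - destruct n as [|n']; [rewrite Nat.Div0.div_0_l; now destruct j|].
    destruct j as [|j]; cbn [tern_aux nth].
    + now rewrite Nat.pow_0_r, Nat.div_1_r.
    + rewrite IH, Nat.Div0.div_div; [reflexivity|].
      assert (S n' / 3 < S n')%nat by (apply Nat.div_lt; lia). lia.
Qed.

Lemma lt_length_tern_aux (f n j : nat) : (n <= f)%nat -> (3 ^ j <= n)%nat ->
  (j < length (tern_aux f n))%nat.
Proof.
  revert n j; induction f as [|f IH]; intros n j Hn Hj.
  - pose proof (pow3_pos j). lia.
  - destruct n as [|n']; [pose proof (pow3_pos j); lia|].
    destruct j as [|j]; cbn [tern_aux length]; [lia|].
    apply -> Nat.succ_lt_mono. apply IH.
    + assert (S n' / 3 < S n')%nat by (apply Nat.div_lt; lia). lia.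
    + apply Nat.div_le_lower_bound; [lia|]. now rewrite <- Nat.pow_succ_r'.
Qed.

Lemma nth_ternary_digits (n j : nat) :
  nth j (ternary_digits n) 0%nat = digit3 n j.
Proof. exact (nth_tern_aux n n j (le_n n)). Qed.

Lemma lt_length_ternary_digits (n j : nat) : (3 ^ j <= n)%nat ->
  (j < length (ternary_digits n))%nat.
Proof. exact (lt_length_tern_aux n n j (le_n n)). Qed.

Lemma digit3_mod_pow3 (n k i : nat) : (i < k)%nat ->
  digit3 (n mod 3 ^ k) i = digit3 n i.
Proof.
  intro Hik; unfold digit3.
  assert (Hk : (3 ^ k = 3 * 3 ^ (k - i - 1) * 3 ^ i)%nat).
  { rewrite <- Nat.pow_succ_r', <- Nat.pow_add_r. f_equal. lia. }
  assert (Hn : n = (n mod 3 ^ k + (3 * 3 ^ (k - i - 1) * (n / 3 ^ k)) * 3 ^ i)%nat).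
  { rewrite (Nat.div_mod_eq n (3 ^ k)) at 1. rewrite Hk. ring. }
  symmetry. rewrite Hn at 1. rewrite Nat.div_add by (pose proof (pow3_pos i); lia).
  now rewrite <- !Nat.mul_assoc, (Nat.mul_comm 3), Nat.Div0.mod_add.
Qed.

Lemma has_block_of_digits (n k h d : nat) : (h <= k)%nat -> (3 ^ (k - 1) <= n)%nat ->
  (forall i, (k - h <= i < k)%nat -> digit3 n i = d) ->
  has_block (ternary_digits n) h d.
Proof.
  intros Hhk Hn Hd. exists (k - h)%nat; split.
  - pose proof (lt_length_ternary_digits n (k - 1) Hn). lia.
  - intros j Hj. rewrite nth_ternary_digits. apply Hd. lia.
Qed.

Lemma digit3_small (r i : nat) : (r < 3 ^ i)%nat -> digit3 r i = 0%nat.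
Proof. intro Hr. unfold digit3. now rewrite Nat.div_small. Qed.

Lemma digit3_large (r k i : nat) : (i < k)%nat ->
  (3 ^ k <= r + 3 ^ i)%nat -> (r < 3 ^ k)%nat -> digit3 r i = 2%nat.
Proof.
  intros Hik Hlo Hhi; unfold digit3.
  assert (Hk : (3 ^ k = 3 ^ i * (3 * 3 ^ (k - i - 1)))%nat).
  { rewrite <- Nat.pow_succ_r', <- Nat.pow_add_r. f_equal. lia. }
  pose proof (pow3_pos i). pose proof (pow3_pos (k - i - 1)).
  assert (Hq : (r / 3 ^ i = 3 * 3 ^ (k - i - 1) - 1)%nat).
  { symmetry. apply (Nat.div_unique _ _ _ (r - 3 ^ i * (3 * 3 ^ (k - i - 1) - 1))); nia. }
  rewrite Hq. symmetry. apply (Nat.mod_unique _ _ (3 ^ (k - i - 1) - 1)); lia.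
Qed.

Lemma has_zero_block_of_mod_lt (n k h : nat) : (h <= k)%nat -> (3 ^ (k - 1) <= n)%nat ->
  (n mod 3 ^ k < 3 ^ (k - h))%nat -> has_block (ternary_digits n) h 0.
Proof.
  intros Hhk Hn Hr. apply (has_block_of_digits n k); [exact Hhk|exact Hn|].
  intros i Hi. rewrite <- (digit3_mod_pow3 n k i) by lia. apply digit3_small.
  pose proof (Nat.pow_le_mono_r 3 (k - h) i ltac:(lia) ltac:(lia)). lia.
Qed.

Lemma has_two_block_of_mod_ge (n k h : nat) : (h <= k)%nat -> (3 ^ (k - 1) <= n)%nat ->
  (3 ^ k <= n mod 3 ^ k + 3 ^ (k - h))%nat -> has_block (ternary_digits n) h 2.
Proof.
  intros Hhk Hn Hr. apply (has_block_of_digits n k); [exact Hhk|exact Hn|].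
  intros i Hi. rewrite <- (digit3_mod_pow3 n k i) by lia. apply (digit3_large _ k); [lia| |].
  - pose proof (Nat.pow_le_mono_r 3 (k - h) i ltac:(lia) ltac:(lia)). lia.
  - apply Nat.mod_upper_bound. pose proof (pow3_pos k). lia.
Qed.

Lemma mod_near_multiple (n b s : nat) (q D : Z) : (s <= b)%nat ->
  Z.of_nat n = (Z.of_nat b * q + D)%Z -> (Z.abs D < Z.of_nat s)%Z ->
  (n mod b < s)%nat \/ (b <= n mod b + s)%nat.
Proof.
  intros Hsb Hn HD.
  assert (Hb : (0 < b)%nat) by lia.
  assert (Hmod : Z.of_nat (n mod b) = (Z.of_nat n mod Z.of_nat b)%Z) by apply Nat2Z.inj_mod.
  destruct (Z_le_gt_dec 0 D) as [Dp|Dn].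
  - rewrite <- (Z.mod_unique _ _ q D) in Hmod; lia.
  - rewrite <- (Z.mod_unique _ _ (q - 1) (D + Z.of_nat b)) in Hmod; lia.
Qed.

Lemma dist_int_lt_near_integer (x e : R) : dist_int x < e ->
  exists M : Z, Rabs (x - IZR M) < e.
Proof.
  unfold dist_int, Rmin. destruct (base_Int_part x) as [B1 B2].
  destruct (Rle_dec _ _); intro H.
  - exists (Int_part x). rewrite Rabs_right; lra.
  - exists (Int_part x + 1)%Z. rewrite plus_IZR, Rabs_left1; lra.
Qed.

Lemma near_integer_pow_4_3 (k : nat) (M : Z) : Rabs ((4 / 3) ^ k - IZR M) < (4 / 9) ^ k ->
  (Z.abs (Z.of_nat (4 ^ k) - M * Z.of_nat (3 ^ k)) * Z.of_nat (3 ^ k) < Z.of_nat (4 ^ k))%Z.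
Proof.
  intro H. apply lt_IZR.
  rewrite mult_IZR, abs_IZR, minus_IZR, mult_IZR, <- !INR_IZR_INZ, !pow_INR.
  replace (INR 4) with 4 by (simpl; lra). replace (INR 3) with 3 by (simpl; lra).
  assert (P3 : 0 < 3 ^ k) by (apply pow_lt; lra).
  assert (E1 : 4 ^ k - IZR M * 3 ^ k = ((4 / 3) ^ k - IZR M) * 3 ^ k).
  { rewrite Rmult_minus_distr_r, <- Rpow_mult_distr. do 2 f_equal. field. }
  assert (E2 : 4 ^ k = (4 / 9) ^ k * 3 ^ k * 3 ^ k).
  { rewrite <- !Rpow_mult_distr. f_equal. field. }
  rewrite E1, Rabs_mult, (Rabs_right (3 ^ k)), E2 at 1 by lra.
  apply Rmult_lt_compat_r; [lra|]. apply Rmult_lt_compat_r; lra.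
Qed.

Lemma pow_le_of_ln_bound (m h k : nat) :
  INR m * (ln 4 / ln 9) + INR h / 2 <= INR k -> (4 ^ m * 3 ^ h <= 3 ^ k * 3 ^ k)%nat.
Proof.
  intro H.
  assert (H9 : ln 9 = 2 * ln 3) by (replace 9 with (3 * 3) by lra; rewrite ln_mult; lra).
  assert (H3 : 0 < ln 3) by (rewrite <- ln_1; apply ln_increasing; lra).
  assert (Hln : INR m * ln 4 + INR h * ln 3 <= INR k * ln 9).
  { rewrite H9 in H |- *.
    assert (INR m * (ln 4 / (2 * ln 3)) * (2 * ln 3) = INR m * ln 4) by (field; lra).
    nra. }
  apply INR_le. rewrite !mult_INR, !pow_INR.
  replace (INR 4) with 4 by (simpl; lra). replace (INR 3) with 3 by (simpl; lra).
  rewrite <- Rpow_mult_distr. replace (3 * 3) with 9 by lra.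
  apply Rnot_lt_le. intro Hlt. apply ln_increasing in Hlt; [|apply pow_lt; lra].
  rewrite ln_mult, !ln_pow in Hlt by (try apply pow_lt; lra). lra.
Qed.

Lemma pow3_le_pow4 (k m : nat) : (k <= m)%nat -> (3 ^ k <= 4 ^ m)%nat.
Proof.
  intro Hkm. apply (Nat.le_trans _ (4 ^ k)).
  - apply Nat.pow_le_mono_l. lia.
  - apply Nat.pow_le_mono_r; lia.
Qed.

Section Rescaling.

Variables (m h k : nat).
Hypothesis Hkm : (k <= m)%nat.
Hypothesis Hpow : (4 ^ m * 3 ^ h <= 3 ^ k * 3 ^ k)%nat.

Lemma h_le_k : (h <= k)%nat.
Proof.
  pose proof (pow3_le_pow4 k m Hkm). pose proof (pow3_pos k).
  apply (Nat.pow_le_mono_r_iff 3); [lia|]. nia.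
Qed.

Lemma rescaled_error_lt (E : Z) :
  (Z.abs E * Z.of_nat (3 ^ k) < Z.of_nat (4 ^ k))%Z ->
  (Z.abs (E * Z.of_nat (4 ^ (m - k))) < Z.of_nat (3 ^ (k - h)))%Z.
Proof.
  intro HE.
  assert (Hsplit3 : (3 ^ k = 3 ^ (k - h) * 3 ^ h)%nat).
  { rewrite Nat.mul_comm. apply pow_split, h_le_k. }
  rewrite (pow_split 4 k m Hkm), Hsplit3 in Hpow. rewrite Hsplit3 in HE.
  rewrite Z.abs_mul, (Z.abs_eq (Z.of_nat _)) by lia.
  pose proof (pow3_pos h). pose proof (pow3_pos (k - h)).
  pose proof (Nat.pow_nonzero 4 (m - k) ltac:(lia)).
  set (a := (4 ^ k)%nat) in *. set (c := (4 ^ (m - k))%nat) in *.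
  set (s := (3 ^ (k - h))%nat) in *. set (t := (3 ^ h)%nat) in *.
  assert (Hc : (Z.abs E * Z.of_nat c * (Z.of_nat s * Z.of_nat t) * Z.of_nat t
                < Z.of_nat s * (Z.of_nat s * Z.of_nat t) * Z.of_nat t)%Z) by nia.
  nia.
Qed.

End Rescaling.

Theorem lemma1 (m h : nat) :
  (0 < m)%nat -> (0 < h)%nat ->
  ~ has_block (ternary_digits (4 ^ m)) h 0 ->
  ~ has_block (ternary_digits (4 ^ m)) h 2 ->
  forall k : nat,
    INR m * (ln 4 / ln 9) + INR h / 2 <= INR k ->
    (k <= m)%nat ->
    dist_int ((4 / 3) ^ k) >= (4 / 9) ^ k.
Proof.
  intros _ _ Hno0 Hno2 k Hk Hkm.
  apply Rnot_lt_ge; intro Hnear.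
  destruct (dist_int_lt_near_integer _ _ Hnear) as [M HM].
  pose proof (pow_le_of_ln_bound m h k Hk) as Hpow.
  pose proof (h_le_k m h k Hkm Hpow) as Hhk.
  assert (Hlen : (3 ^ (k - 1) <= 4 ^ m)%nat).
  { pose proof (pow3_le_pow4 k m Hkm).
    pose proof (Nat.pow_le_mono_r 3 (k - 1) k ltac:(lia) ltac:(lia)). lia. }
  set (E := (Z.of_nat (4 ^ k) - M * Z.of_nat (3 ^ k))%Z).
  destruct (mod_near_multiple (4 ^ m) (3 ^ k) (3 ^ (k - h))
              (M * Z.of_nat (4 ^ (m - k))) (E * Z.of_nat (4 ^ (m - k)))).
  - apply Nat.pow_le_mono_r; lia.
  - rewrite (pow_split 4 k m Hkm), Nat2Z.inj_mul. unfold E. ring.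
  - exact (rescaled_error_lt m h k Hkm Hpow E (near_integer_pow_4_3 k M HM)).
  - now apply Hno0, (has_zero_block_of_mod_lt _ k).
  - now apply Hno2, (has_two_block_of_mod_ge _ k).
Qed.
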